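(* Let $m,n$ be positive integers with $n\ge 2$, let $\Pi$ be a regular $(nm+2)$-gon, and let $\Gamma^m_{A_{n-1}}$ and $\tau_m$ be the quiver of $m$-diagonals of $\Pi$ and the rotation map described in the context. Then $(\Gamma^m_{A_{n-1}},\tau_m)$ is a stable translation quiver.
   Context: The vertices of $\Pi$ are labelled $1,\dots,nm+2$ clockwise, and vertex labels are taken modulo $nm+2$. A diagonal with endpoints $i,j$ is written $(i,j)=(j,i)$. An $m$-diagonal is a diagonal of $\Pi$ that divides $\Pi$ into an $(mj+2)$-gon and an $(m(n-j)+2)$-gon for some integer $1\le j\le n-1$. The quiver $\Gamma^m_{A_{n-1}}$ has as vertices the $m$-diagonals of $\Pi$. There is an arrow $D\to D'$ (and at most one) exactly when $D$ and $D'$ share an endpoint $i$, with other endpoints $j$ and $j'$ respectively, such that $D$, $D'$ and the boundary arc from $j$ to $j'$ not containing $i$ bound an $(m+2)$-gon, and $D$ is rotated onto the line through $D'$ by a clockwise rotation about $i$. Equivalently, $D=(i,j)$ and $D'=(i,j+m)$ are both $m$-diagonals. The map $\tau_m$ sends an $m$-diagonal to its image under the anticlockwise rotation of $\Pi$ about its centre through $2m\pi/(nm+2)$, that is $(i,j)\mapsto(i-m,j-m)$. A translation quiver is a pair $(\Gamma,\tau)$ with the following properties: $\Gamma$ is a locally finite quiver with vertex set $\Gamma_0$; $\tau:\Gamma_0'\to\Gamma_0$ is an injective map defined on a subset $\Gamma_0'\subseteq\Gamma_0$; and for all $X\in\Gamma_0$ and $Y\in\Gamma_0'$ the number of arrows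 $X\to Y$ equals the number of arrows $\tau(Y)\to X$. The vertices not in $\Gamma_0'$ are called projective. The translation quiver is stable if $\Gamma_0'=\Gamma_0$ and $\tau$ is bijective. *)

From mathcomp Require Import all_boot.
Unset Printing Implicit Defensive.

(* Vertices of the regular (nm+2)-gon Pi are labelled by 'I_((n*m).+2)
   (i.e. 0 .. nm+1 instead of 1 .. nm+2), clockwise; labels are taken modulo
   nm+2.  A diagonal (i,j) = (j,i) is the unordered pair, represented as the
   set [set i; j]. *)

Definition vshift (n m : nat) (k : nat) (i : 'I_((n*m).+2)) : 'I_((n*m).+2) :=
  inord ((i + k) %% (n*m).+2).

(* D is an m-diagonal: D = {i,j} and the boundary arc i, i+1, ..., j has
   m*k+2 vertices for some 1 <= k <= n-1, i.e. D cuts Pi into an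
   (mk+2)-gon and an (m(n-k)+2)-gon. *)
Definition is_mdiag (n m : nat) (D : {set 'I_((n*m).+2)}) : bool :=
  [exists i : 'I_((n*m).+2), exists j : 'I_((n*m).+2),
     [&& D == [set i; j], i != j &
         [exists k : 'I_n, (0 < k) && ((j + (n*m).+2 - i) %% (n*m).+2 == m * k + 1)]]].

Definition mdiag_arrow (n m : nat) (D D' : {set 'I_((n*m).+2)}) : bool :=
  [&& is_mdiag n m D, is_mdiag n m D' &
      [exists i : 'I_((n*m).+2), exists j : 'I_((n*m).+2),
         (D == [set i; j]) && (D' == [set i; vshift n m m j])]].

Definition mdiag_arrows (n m : nat) (D D' : {set 'I_((n*m).+2)}) : nat :=
  nat_of_bool (mdiag_arrow n m D D').

(* tau_m : (i,j) |-> (i-m, j-m), anticlockwise rotation by 2 m pi/(nm+2);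
   i - m = i + (nm+2-m) mod (nm+2). *)
Definition tau_m (n m : nat) (D : {set 'I_((n*m).+2)}) : {set 'I_((n*m).+2)} :=
  [set vshift n m ((n*m).+2 - m) x | x in D].

(* (Gamma, tau) is a stable translation quiver, where the quiver Gamma has
   vertex set {x in T | x \in V} (T finite, hence Gamma locally finite),
   arr X Y = number of arrows X -> Y, and tau is defined on all of V
   (no projective vertices) and is a bijection V -> V. *)
Definition stable_translation_quiver (T : finType) (V : {pred T})
    (arr : T -> T -> nat) (tau : T -> T) : Prop :=
  [/\ {in V, forall x, tau x \in V},
      {in V &, injective tau},
      {in V, forall y, exists2 x, x \in V & tau x = y} &
      {in V &, forall X Y, arr X Y = arr (tau Y) X}].

From mathcomp Require Import all_boot.

(* Rotations of Pi permute its vertices and preserve the length of every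
   boundary arc, hence map m-diagonals to m-diagonals; tau_m is the rotation
   by -m, with inverse the rotation by m.  The mesh condition holds because
   the arrow (i,j) -> (i,j+m) is matched by the arrow
   tau_m (i,j+m) = (j,i-m) -> (j,i) = (i,j), obtained by pivoting about j. *)

Lemma imset_pair (aT rT : finType) (f : aT -> rT) (x y : aT) :
  f @: [set x; y] = [set f x; f y].
Proof. by rewrite imsetU1 imset_set1. Qed.

Section Rotation.

Variables n m : nat.
Local Notation N := (n * m).+2.
Local Notation rot := (vshift n m).

Lemma vshift_val k (i : 'I_N) : nat_of_ord (rot k i) = (i + k) %% N.
Proof. by rewrite /vshift inordK // ltn_mod. Qed.

Lemma vshiftD a b (i : 'I_N) : rot a (rot b i) = rot (b + a) i.
Proof. by apply: val_inj; rewrite /= !vshift_val modnDml addnA. Qed.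

Lemma vshiftN (i : 'I_N) : rot N i = i.
Proof. by apply: val_inj; rewrite /= vshift_val modnDr modn_small. Qed.

Lemma vshiftK [k] : k <= N -> cancel (rot k) (rot (N - k)).
Proof. by move=> le_kN i; rewrite vshiftD subnKC // vshiftN. Qed.

Lemma vshiftNK [k] : k <= N -> cancel (rot (N - k)) (rot k).
Proof. by move=> le_kN i; rewrite vshiftD subnK // vshiftN. Qed.

Lemma vshift_inj k : injective (rot k).
Proof.
move=> i j /(congr1 val) /eqP; rewrite /= !vshift_val eqn_modDr.
by rewrite !modn_small // => /eqP /val_inj.
Qed.

Lemma arc_vshift k (i j : 'I_N) :
  (rot k j + N - rot k i) %% N = (j + N - i) %% N.
Proof.
have le_iN : i <= N by apply: ltnW.
have le_kiN : rot k i <= N by apply: ltnW.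
apply/eqP; rewrite -(eqn_modDr (rot k i)) subnK ?(leq_trans le_kiN (leq_addl _ _)) //.
rewrite !vshift_val modnDmr modnDml modnDr.
by rewrite addnA subnK ?(leq_trans le_iN (leq_addl _ _)) // addnAC modnDr.
Qed.

Lemma is_mdiag_vshift k D : is_mdiag n m D -> is_mdiag n m (rot k @: D).
Proof.
case/existsP=> i /existsP [j /and3P [/eqP -> neq_ij arc_ij]].
apply/existsP; exists (rot k i); apply/existsP; exists (rot k j).
by rewrite imset_pair eqxx (inj_eq (@vshift_inj k)) neq_ij arc_vshift.
Qed.

Lemma is_mdiag_tau D : is_mdiag n m D -> is_mdiag n m (tau_m n m D).
Proof. exact: is_mdiag_vshift. Qed.

Lemma tau_mK (D : {set 'I_N}) : m <= N -> rot m @: tau_m n m D = D.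
Proof.
move=> le_mN; rewrite /tau_m -imset_comp.
by rewrite (eq_imset _ (vshiftNK le_mN)) imset_id.
Qed.

Lemma tau_mKV (D : {set 'I_N}) : m <= N -> tau_m n m (rot m @: D) = D.
Proof.
move=> le_mN; rewrite /tau_m -imset_comp.
by rewrite (eq_imset _ (vshiftK le_mN)) imset_id.
Qed.

Lemma pivot_tau_m (X Y : {set 'I_N}) : m <= N ->
  [exists i, exists j, (X == [set i; j]) && (Y == [set i; rot m j])] =
  [exists i, exists j, (tau_m n m Y == [set i; j]) && (X == [set i; rot m j])].
Proof.
move=> le_mN; apply/idP/idP.
- case/existsP=> i /existsP [j /andP [/eqP -> /eqP ->]].
  apply/existsP; exists j; apply/existsP; exists (rot (N - m) i).
  by rewrite /tau_m imset_pair vshiftK // vshiftNK // setUC eqxx setUC eqxx.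
- case/existsP=> i /existsP [j /andP [/eqP tauY /eqP ->]].
  apply/existsP; exists (rot m j); apply/existsP; exists i.
  by rewrite setUC eqxx -(tau_mK Y le_mN) tauY imset_pair setUC eqxx.
Qed.

Lemma mdiag_arrows_tau_m (X Y : {set 'I_N}) : m <= N ->
  is_mdiag n m X -> is_mdiag n m Y ->
  mdiag_arrows n m X Y = mdiag_arrows n m (tau_m n m Y) X.
Proof.
move=> le_mN mdX mdY.
by rewrite /mdiag_arrows /mdiag_arrow mdX mdY is_mdiag_tau // pivot_tau_m.
Qed.

End Rotation.

Theorem proposition2p2 (n m : nat) (hm : 0 < m) (hn : 2 <= n) :
  @stable_translation_quiver {set 'I_((n*m).+2)}
    (fun D => is_mdiag n m D) (mdiag_arrows n m) (tau_m n m).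
Proof.
have le_mN : m <= (n * m).+2.
  by rewrite leqW // leqW // leq_pmull // ltnW.
split.
- by move=> D; apply: is_mdiag_tau.
- by move=> D E _ _; apply: imset_inj; apply: vshift_inj.
- move=> D mdD; exists (vshift n m m @: D); first exact: is_mdiag_vshift.
  exact: tau_mKV.
- by move=> X Y; apply: mdiag_arrows_tau_m.
Qed.
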